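(* Let $A_o,A_i\in\mathbb R^{n_y\times n_x}$, let $B_o,B_i\in\mathbb R^{n_y\times n_y}$ and $C_o,C_i\in\mathbb R^{n_x\times n_x}$ be invertible. If the inclusion $y\in\{(A_o+B_o\Delta C_o)x:\|\Delta\|\le1\}$ contains the inclusion $y\in\{(A_i+B_i\Delta C_i)x:\|\Delta\|\le1\}$, then $\sigma_{\max}(\tilde B)\,\sigma_{\max}(\tilde C)\le1$, where $\tilde B=B_o^{-1}B_i$ and $\tilde C=C_iC_o^{-1}$.
   Context: $\|\cdot\|$ is the spectral norm and $\sigma_{\max}$ denotes the largest singular value. An inclusion contains another if every pair $(x,y)\in\mathbb C^{n_x}\times\mathbb C^{n_y}$ satisfying the second also satisfies the first. *)

From HB Require Import structures.
From mathcomp Require Import all_boot all_order all_algebra.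
From mathcomp Require Import complex.
From mathcomp Require Import boolp classical_sets reals.
Set Implicit Arguments. Unset Strict Implicit. Unset Printing Implicit Defensive.
Import Order.TTheory GRing.Theory Num.Theory.
Local Open Scope ring_scope.
Local Open Scope classical_set_scope.

Definition cnorm2 (R : realType) (n : nat) (v : 'cV[R[i]]_n) : R :=
  \sum_(k < n) (complex.Re (v k 0) ^+ 2 + complex.Im (v k 0) ^+ 2).

Definition rnorm2 (R : realType) (n : nat) (v : 'cV[R]_n) : R :=
  \sum_(k < n) v k 0 ^+ 2.

Definition specnormC (R : realType) (m n : nat) (M : 'M[R[i]]_(m, n)) : R :=
  sup [set Num.sqrt (cnorm2 (M *m v)) | v in [set v : 'cV[R[i]]_n | cnorm2 v = 1]].

Definition sigma_max (R : realType) (m n : nat) (M : 'M[R]_(m, n)) : R :=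
  sup [set Num.sqrt (rnorm2 (M *m v)) | v in [set v : 'cV[R]_n | rnorm2 v = 1]].

Definition cmx (R : realType) (m n : nat) (M : 'M[R]_(m, n)) : 'M[R[i]]_(m, n) :=
  map_mx (fun r : R => r%:C%C) M.

Definition inclusion (R : realType) (nx ny : nat)
  (A : 'M[R]_(ny, nx)) (B : 'M[R]_ny) (C : 'M[R]_nx)
  (x : 'cV[R[i]]_nx) (y : 'cV[R[i]]_ny) : Prop :=
  exists D : 'M[R[i]]_(ny, nx),
    specnormC D <= 1 /\ y = (cmx A + cmx B *m D *m cmx C) *m x.

From HB Require Import structures.
From mathcomp Require Import all_boot all_order all_algebra.
From mathcomp Require Import complex.
From mathcomp Require Import boolp classical_sets reals.
From mathcomp Require Import ring lra.
Import Order.TTheory GRing.Theory Num.Theory.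
Set Implicit Arguments. Unset Strict Implicit. Unset Printing Implicit Defensive.
Local Open Scope ring_scope.

(* Fix real unit vectors w and z, and let u = Ci Co^-1 z and x = Co^-1 z, so
   that Ci x = u and Co x = z.  The rank-one matrices (+-w) u^T / |u| are
   contractions, so Ai x +- |u| Bi w lie in the inner inclusion at x, hence in
   the outer one: Ai x +- |u| Bi w = Ao x + Bo D+- z with ||D+-|| <= 1.
   Subtracting, 2 |u| Bo^-1 Bi w = (D+ - D-) z has norm at most 2, that is
   |Bo^-1 Bi w| |Ci Co^-1 z| <= 1; taking suprema over w and z concludes. *)

Section RealEuclideanNorm.
Variable R : realType.

Lemma sum_mul_sqr_le n (a b : 'I_n -> R) :
  (\sum_k a k * b k) ^+ 2 <= (\sum_k a k ^+ 2) * (\sum_k b k ^+ 2).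
Proof.
set A := \sum_k a k ^+ 2; set B := \sum_k b k ^+ 2; set S := \sum_k a k * b k.
have lagrange : A * B + B * A - 2 * (S * S) =
    \sum_k \sum_l (a k * b l - a l * b k) ^+ 2.
  rewrite !big_distrlr mulr_sumr -big_split -sumrB; apply: eq_bigr => k _ /=.
  rewrite mulr_sumr -big_split -sumrB; apply: eq_bigr => l _ /=; ring.
have : 0 <= \sum_k \sum_l (a k * b l - a l * b k) ^+ 2.
  by apply: sumr_ge0 => k _; apply: sumr_ge0 => l _; exact: sqr_ge0.
rewrite -lagrange; lra.
Qed.

Lemma rnorm2_ge0 n (v : 'cV[R]_n) : 0 <= rnorm2 v.
Proof. by apply: sumr_ge0 => k _; exact: sqr_ge0. Qed.

Lemma rnorm2Z n (c : R) (v : 'cV[R]_n) : rnorm2 (c *: v) = c ^+ 2 * rnorm2 v.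
Proof. by rewrite /rnorm2 mulr_sumr; apply: eq_bigr => k _; rewrite mxE exprMn. Qed.

Lemma rnorm2N n (v : 'cV[R]_n) : rnorm2 (- v) = rnorm2 v.
Proof. by rewrite -scaleN1r rnorm2Z sqrrN expr1n mul1r. Qed.

Lemma rnorm2B_le n (a b : 'cV[R]_n) : rnorm2 (a - b) <= 2 * rnorm2 a + 2 * rnorm2 b.
Proof.
rewrite /rnorm2 !mulr_sumr -big_split; apply: ler_sum => k _ /=; rewrite !mxE.
by have := sqr_ge0 (a k 0 + b k 0); nra.
Qed.

Lemma rnorm2D_le n (a b : 'cV[R]_n) : rnorm2 (a + b) <= 2 * rnorm2 a + 2 * rnorm2 b.
Proof. by have := rnorm2B_le a (- b); rewrite opprK rnorm2N. Qed.

Definition frobenius2 m n (M : 'M[R]_(m, n)) : R := \sum_i \sum_j M i j ^+ 2.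

Lemma rnorm2_mulmx_le m n (M : 'M[R]_(m, n)) (a : 'cV[R]_n) :
  rnorm2 (M *m a) <= frobenius2 M * rnorm2 a.
Proof.
rewrite /rnorm2 /frobenius2 mulr_suml; apply: ler_sum => i _; rewrite mxE.
exact: (sum_mul_sqr_le (M i) (a^~ 0)).
Qed.

Definition contraction m n (M : 'M[R]_(m, n)) := forall a, rnorm2 (M *m a) <= rnorm2 a.

Lemma mulmx_rank1 m n (w : 'cV[R]_m) (u a : 'cV[R]_n) :
  w *m u^T *m a = (\sum_k u k 0 * a k 0) *: w.
Proof.
apply/matrixP => i j; rewrite -mulmxA !mxE big_ord1 !mxE (ord1 j) mulrC.
by congr (_ * _); apply: eq_bigr => k _; rewrite !mxE.
Qed.

Lemma rank1_contraction m n (w : 'cV[R]_m) (u : 'cV[R]_n) :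
  rnorm2 w = 1 -> 0 < rnorm2 u ->
  contraction ((Num.sqrt (rnorm2 u))^-1 *: (w *m u^T)).
Proof.
move=> w1 u_gt0 a; rewrite -scalemxAl mulmx_rank1 scalerA rnorm2Z w1 mulr1.
rewrite exprMn exprVn (sqr_sqrtr (ltW u_gt0)) mulrC ler_pdivrMr // mulrC.
exact: sum_mul_sqr_le.
Qed.

Lemma rank1_mulmx_u m n (w : 'cV[R]_m) (u : 'cV[R]_n) : 0 < rnorm2 u ->
  (Num.sqrt (rnorm2 u))^-1 *: (w *m u^T) *m u = Num.sqrt (rnorm2 u) *: w.
Proof.
move=> u_gt0; rewrite -scalemxAl mulmx_rank1 scalerA.
have -> : \sum_k u k 0 * u k 0 = Num.sqrt (rnorm2 u) ^+ 2.
  by rewrite (sqr_sqrtr (ltW u_gt0)); apply: eq_bigr => k _; rewrite expr2.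
by rewrite expr2 mulKf // sqrtr_eq0 -ltNge.
Qed.

End RealEuclideanNorm.

Local Open Scope classical_set_scope.

Section SupremumBounds.
Variable R : realType.
Implicit Types (E : set R) (a c : R).

(* [0 <= c] is needed because [sup set0 = 0]. *)
Lemma sup_le_nonneg E c : 0 <= c -> (forall x, E x -> x <= c) -> sup E <= c.
Proof.
move=> c_ge0 Ec; have [->|/set0P[x Ex]] := eqVneq E set0; first by rewrite sup0.
by apply: ge_sup => //; exists x.
Qed.

Lemma sup_ge0 E : (forall x, E x -> 0 <= x) -> 0 <= sup E.
Proof.
move=> E_ge0; have [supE|/sup_out->//] := pselect (has_sup E).
have [[x Ex] _] := supE; exact: le_trans (E_ge0 x Ex) (sup_upper_bound supE Ex).
Qed.

Lemma mulr_sup_le1 E a : 0 <= a -> (forall x, E x -> a * x <= 1) -> a * sup E <= 1.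
Proof.
rewrite le_eqVlt => /predU1P[<-|a_gt0] aE; first by rewrite mul0r ler01.
rewrite -ler_pdivlMl // mulr1; apply: sup_le_nonneg; first by rewrite invr_ge0 ltW.
by move=> x /aE; rewrite -ler_pdivlMl // mulr1.
Qed.

Lemma sup_mul_sup_le1 EB EC :
  (forall b, EB b -> 0 <= b) -> (forall c, EC c -> 0 <= c) ->
  (forall b c, EB b -> EC c -> b * c <= 1) -> sup EB * sup EC <= 1.
Proof.
move=> EB_ge0 EC_ge0 EBC; rewrite mulrC; apply: mulr_sup_le1 (sup_ge0 EC_ge0) _.
move=> b EBb; rewrite mulrC; apply: mulr_sup_le1 (EB_ge0 b EBb) _.
by move=> c ECc; exact: EBC.
Qed.

End SupremumBounds.

Section ComplexEuclideanNorm.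
Variable R : realType.

Definition reM m n (M : 'M[R[i]]_(m, n)) : 'M[R]_(m, n) := map_mx (@complex.Re R) M.
Definition imM m n (M : 'M[R[i]]_(m, n)) : 'M[R]_(m, n) := map_mx (@complex.Im R) M.

Lemma cnorm2E n (v : 'cV[R[i]]_n) : cnorm2 v = rnorm2 (reM v) + rnorm2 (imM v).
Proof. by rewrite /cnorm2 /rnorm2 -big_split; apply: eq_bigr => k _; rewrite !mxE. Qed.

Lemma cnorm2_ge0 n (v : 'cV[R[i]]_n) : 0 <= cnorm2 v.
Proof. by rewrite cnorm2E addr_ge0 ?rnorm2_ge0. Qed.

Lemma reMB m n (A B : 'M[R[i]]_(m, n)) : reM (A - B) = reM A - reM B.
Proof. exact: (map_mxB (@complex.Re R : Rcomplex R -> R)). Qed.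

Lemma imMB m n (A B : 'M[R[i]]_(m, n)) : imM (A - B) = imM A - imM B.
Proof. exact: (map_mxB (@complex.Im R : Rcomplex R -> R)). Qed.

Lemma reM_mul m n p (A : 'M[R[i]]_(m, n)) (B : 'M[R[i]]_(n, p)) :
  reM (A *m B) = reM A *m reM B - imM A *m imM B.
Proof.
apply/matrixP => i j; rewrite !mxE (raddf_sum (@complex.Re R : Rcomplex R -> R)).
by rewrite -sumrB; apply: eq_bigr => k _; rewrite !mxE; case: (A i k); case: (B k j).
Qed.

Lemma imM_mul m n p (A : 'M[R[i]]_(m, n)) (B : 'M[R[i]]_(n, p)) :
  imM (A *m B) = reM A *m imM B + imM A *m reM B.
Proof.
apply/matrixP => i j; rewrite !mxE (raddf_sum (@complex.Im R : Rcomplex R -> R)).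
rewrite -big_split; apply: eq_bigr => k _; rewrite !mxE.
by case: (A i k); case: (B k j) => * /=; ring.
Qed.

Lemma reM_cmx m n (M : 'M[R]_(m, n)) : reM (cmx M) = M.
Proof. by apply/matrixP => i j; rewrite !mxE. Qed.

Lemma imM_cmx m n (M : 'M[R]_(m, n)) : imM (cmx M) = 0.
Proof. by apply/matrixP => i j; rewrite !mxE. Qed.

Lemma cnorm2_cmx n (v : 'cV[R]_n) : cnorm2 (cmx v) = rnorm2 v.
Proof.
rewrite cnorm2E reM_cmx imM_cmx -[0 : 'cV_n](scale0r 0) rnorm2Z.
by rewrite expr0n mul0r addr0.
Qed.

Lemma cnorm2B_le n (a b : 'cV[R[i]]_n) :
  cnorm2 (a - b) <= 2 * cnorm2 a + 2 * cnorm2 b.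
Proof.
rewrite !cnorm2E reMB imMB.
by have := rnorm2B_le (reM a) (reM b); have := rnorm2B_le (imM a) (imM b); lra.
Qed.

Lemma cnorm2_mulmx_le m n (D : 'M[R[i]]_(m, n)) (v : 'cV[R[i]]_n) :
  cnorm2 (D *m v) <= 2 * (frobenius2 (reM D) + frobenius2 (imM D)) * cnorm2 v.
Proof.
rewrite !cnorm2E reM_mul imM_mul.
have := rnorm2B_le (reM D *m reM v) (imM D *m imM v).
have := rnorm2D_le (reM D *m imM v) (imM D *m reM v).
have := rnorm2_mulmx_le (reM D) (reM v); have := rnorm2_mulmx_le (reM D) (imM v).
have := rnorm2_mulmx_le (imM D) (reM v); have := rnorm2_mulmx_le (imM D) (imM v).
lra.
Qed.

Lemma specnormC_ge m n (D : 'M[R[i]]_(m, n)) (v : 'cV[R[i]]_n) :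
  cnorm2 v = 1 -> Num.sqrt (cnorm2 (D *m v)) <= specnormC D.
Proof.
move=> v1; apply: sup_upper_bound; last by exists v.
split; first by exists (Num.sqrt (cnorm2 (D *m v))), v.
exists (Num.sqrt (2 * (frobenius2 (reM D) + frobenius2 (imM D)))).
move=> _ [w w1 <-]; apply: ler_wsqrtr.
by have := cnorm2_mulmx_le D w; rewrite w1 mulr1.
Qed.

Lemma specnormC_le1 m n (D : 'M[R[i]]_(m, n)) (v : 'cV[R[i]]_n) :
  specnormC D <= 1 -> cnorm2 v = 1 -> cnorm2 (D *m v) <= 1.
Proof.
move=> D1 v1; rewrite -ler_sqrt // sqrtr1.
exact: le_trans (specnormC_ge D v1) D1.
Qed.

Lemma specnormC_cmx_le1 m n (M : 'M[R]_(m, n)) :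
  contraction M -> specnormC (cmx M) <= 1.
Proof.
move=> M1; apply: sup_le_nonneg => // _ [v v1 <-]; rewrite -sqrtr1.
apply: ler_wsqrtr; rewrite -v1 !cnorm2E reM_mul imM_mul reM_cmx imM_cmx.
by rewrite !mul0mx subr0 addr0 lerD.
Qed.

Lemma cnorm2_subr_mulmx_le m n (D1 D2 : 'M[R[i]]_(m, n)) (v : 'cV[R[i]]_n) :
  specnormC D1 <= 1 -> specnormC D2 <= 1 -> cnorm2 v = 1 ->
  cnorm2 ((D1 - D2) *m v) <= 4.
Proof.
move=> D1_le1 D2_le1 v1; rewrite mulmxBl.
have := cnorm2B_le (D1 *m v) (D2 *m v).
have := specnormC_le1 D1_le1 v1; have := specnormC_le1 D2_le1 v1; lra.
Qed.

End ComplexEuclideanNorm.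

Lemma mulmx_perturbB (K : pzRingType) p q r s (A : 'M[K]_(p, r)) (B : 'M[K]_p)
    (D1 D2 : 'M[K]_(p, q)) (C : 'M[K]_(q, r)) (x : 'M[K]_(r, s)) :
  (A + B *m D1 *m C) *m x - (A + B *m D2 *m C) *m x = B *m ((D1 - D2) *m (C *m x)).
Proof.
by rewrite -mulmxBl opprD addrACA subrr add0r -mulmxBl -mulmxBr !mulmxA.
Qed.

Section ComplexEmbedding.
Variable R : realType.

Lemma cmxM m n p (A : 'M[R]_(m, n)) (B : 'M[R]_(n, p)) : cmx (A *m B) = cmx A *m cmx B.
Proof. exact: map_mxM. Qed.

Lemma cmxB m n (A B : 'M[R]_(m, n)) : cmx (A - B) = cmx A - cmx B.
Proof. exact: map_mxB. Qed.

Lemma cmx1 n : cmx (1%:M : 'M[R]_n) = 1%:M.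
Proof. exact: map_mx1. Qed.

End ComplexEmbedding.

Section ContainedInclusions.
Variables (R : realType) (nx ny : nat).
Variables (Ao Ai : 'M[R]_(ny, nx)) (Bo Bi : 'M[R]_ny) (Co Ci : 'M[R]_nx).
Hypothesis contained : forall x y, inclusion Ai Bi Ci x y -> inclusion Ao Bo Co x y.
Hypothesis Bo_unit : Bo \in unitmx.

Lemma contained_inclusion_gap (x : 'cV[R]_nx) (M1 M2 : 'M[R]_(ny, nx)) :
  contraction M1 -> contraction M2 ->
  exists D1 D2, [/\ specnormC D1 <= 1, specnormC D2 <= 1 &
    cmx (invmx Bo *m Bi *m ((M1 - M2) *m (Ci *m x))) = (D1 - D2) *m cmx (Co *m x)].
Proof.
move=> /specnormC_cmx_le1 M1_le1 /specnormC_cmx_le1 M2_le1.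
have [D1 [D1_le1 e1]] := @contained (cmx x) _ (ex_intro _ _ (conj M1_le1 erefl)).
have [D2 [D2_le1 e2]] := @contained (cmx x) _ (ex_intro _ _ (conj M2_le1 erefl)).
exists D1, D2; split => //.
have := congr1 (mulmx (cmx (invmx Bo))) (congr2 (fun a b => a - b) e1 e2).
rewrite !mulmx_perturbB !mulmxA -!cmxM mulVmx // cmx1 mul1mx.
by rewrite !cmxM cmxB !mulmxA.
Qed.

Hypothesis Co_unit : Co \in unitmx.

Lemma contained_inclusion_le1 (w : 'cV[R]_ny) (z : 'cV[R]_nx) :
  rnorm2 w = 1 -> rnorm2 z = 1 ->
  rnorm2 (invmx Bo *m Bi *m w) * rnorm2 (Ci *m invmx Co *m z) <= 1.
Proof.
move=> w1 z1; set u := Ci *m invmx Co *m z.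
have [u0|u_gt0] := eqVneq (rnorm2 u) 0; first by rewrite u0 mulr0 ler01.
have {}u_gt0 : 0 < rnorm2 u by rewrite lt_def u_gt0 rnorm2_ge0.
set s := Num.sqrt (rnorm2 u).
have wN1 : rnorm2 (- w) = 1 by rewrite rnorm2N.
have [D1 [D2 [D1_le1 D2_le1]]] := contained_inclusion_gap (invmx Co *m z)
  (rank1_contraction w1 u_gt0) (rank1_contraction wN1 u_gt0).
rewrite [Ci *m _]mulmxA -/u mulmxBl !rank1_mulmx_u // mulmxA mulmxV // mul1mx => gap.
have cz1 : cnorm2 (cmx z) = 1 by rewrite cnorm2_cmx.
have := cnorm2_subr_mulmx_le D1_le1 D2_le1 cz1.
rewrite -gap cnorm2_cmx scalerN opprK -scalerDl -scalemxAr rnorm2Z.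
rewrite -/s -[s + s]mulr2n exprMn_n (sqr_sqrtr (rnorm2_ge0 u)); lra.
Qed.

End ContainedInclusions.

Theorem lemma2 (R : realType) (nx ny : nat)
  (Ao Ai : 'M[R]_(ny, nx)) (Bo Bi : 'M[R]_ny) (Co Ci : 'M[R]_nx) :
  Bo \in unitmx -> Bi \in unitmx -> Co \in unitmx -> Ci \in unitmx ->
  (forall x y, inclusion Ai Bi Ci x y -> inclusion Ao Bo Co x y) ->
  sigma_max (invmx Bo *m Bi) * sigma_max (Ci *m invmx Co) <= 1.
Proof.
move=> Bo_unit _ Co_unit _ contained.
apply: sup_mul_sup_le1 => [_ [v _ <-]|_ [v _ <-]|_ _ [w w1 <-] [z z1 <-]].
- exact: sqrtr_ge0.
- exact: sqrtr_ge0.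
rewrite -sqrtrM ?rnorm2_ge0 // -sqrtr1; apply: ler_wsqrtr.
exact: contained_inclusion_le1 contained Bo_unit Co_unit w z w1 z1.
Qed.
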